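(* Let $W$ be a binary symmetric channel (input and output alphabet $\{0,1\}$, crossover probability $p$), $N=2^n$, and $0\le i\le N-1$. Then for every $\mathbf{y}\in\mathbb{F}_2^N$ there exists $\mathbf{v}\in\mathbb{F}_2^N$ with $v_{i+1}=\dots=v_N=0$ and $W_N^{(i)}(\mathbf{v})=W_N^{(i)}(\mathbf{y})$. Consequently the set of values $\{W_N^{(i)}(\mathbf{y}):\mathbf{y}\in\mathbb{F}_2^N\}$ equals $\{W_N^{(i)}(\mathbf{y}):\mathbf{y}\in\mathbb{F}_2^N,\ y_{i+1}^N=0\}$, and the number of equivalence classes is at most $2^i$.
   Context: $G_N=F^{\otimes n}$ with $F=\begin{pmatrix}1&0\\1&1\end{pmatrix}$ over $\mathbb{F}_2$; $A(N,i)$ is the submatrix of rows $i+1,\dots,N$ of $G_N$, with row space $\mathrm{row}(A(N,i))$. For the BSC, $W^N(\mathbf{y}|\mathbf{x})=\prod_j W(y_j|x_j)$ with $W(y|x)=1-p$ if $y=x$ and $p$ otherwise. Define $W_N^{(i)}(\mathbf{y})=\frac{1}{2^{N-1}}\sum_{\mathbf{c}\in\mathrm{row}(A(N,i))}W^N(\mathbf{y}|\mathbf{c})$ (the transition probability of bit channel $i$ with all previous bits and the current bit equal to $0$). Equivalence classes: classes of vectors with equal value of $W_N^{(i)}$. *)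

From HB Require Import structures.
From mathcomp Require Import all_boot all_order all_algebra.
From mathcomp Require Import mxtens.
From mathcomp Require Import reals.
Set Implicit Arguments. Unset Strict Implicit. Unset Printing Implicit Defensive.
Import Order.TTheory GRing.Theory Num.Theory.
Local Open Scope ring_scope.

Definition Fker : 'M['F_2]_2 := \matrix_(a < 2, b < 2) (if (a < b)%N then 0 else 1).

Fixpoint Gmx (n : nat) : 'M['F_2]_(2 ^ n) :=
  match n with
  | 0 => 1%:M
  | n'.+1 => castmx (esym (expnS 2 n'), esym (expnS 2 n')) (tensmx Fker (Gmx n'))
  end.

(* A(N,i): rows i+1,...,N (1-indexed) of G_N, i.e. 0-indexed rows i..N-1. *)
Lemma Amx_idx (N i : nat) (k : 'I_(N - i)) : (k + i < N)%N.
Proof. by rewrite addnC -ltn_subRL. Qed.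

Definition Amx (n i : nat) : 'M['F_2]_(2 ^ n - i, 2 ^ n) :=
  \matrix_(k < 2 ^ n - i, j < 2 ^ n) Gmx n (Ordinal (Amx_idx k)) j.

Definition rowA (n i : nat) : {set 'rV['F_2]_(2 ^ n)} :=
  [set c | (c <= Amx n i)%MS].

Definition WN (R : realType) (p : R) (N : nat) (y x : 'rV['F_2]_N) : R :=
  \prod_(j < N) (if y 0 j == x 0 j then 1 - p else p).

Definition Wbit (R : realType) (p : R) (n i : nat) (y : 'rV['F_2]_(2 ^ n)) : R :=
  ((2 ^ (2 ^ n - 1))%:R)^-1 * \sum_(c in rowA n i) WN p y c.

Arguments Wbit {R} p n i y.

Definition Wclasses (R : realType) (p : R) (n i : nat) :
  {set {set 'rV['F_2]_(2 ^ n)}} :=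
  equivalence_partition (fun y z => Wbit p n i y == Wbit p n i z) setT.

From HB Require Import structures.
From mathcomp Require Import all_boot all_order all_algebra.
From mathcomp Require Import mxtens reals.
Import Order.TTheory GRing.Theory Num.Theory.
Local Open Scope ring_scope.

(** [G_N] is lower unitriangular, so the rows [i+1..N] of [G_N] can
    clear the coordinates [i+1..N] of any [y] by back substitution, starting
    from the last one.  Adding a codeword of [row(A(N,i))] to [y] only permutes
    the summands of [W_N^(i)(y)], so every value of [W_N^(i)] is attained on
    one of the [2^i] vectors supported on the first [i] coordinates. *)

Section LowerUnitriangularElimination.

Variables (K : fieldType) (N : nat) (G : 'M[K]_N).
Hypothesis G_diag : forall j, G j j = 1.
Hypothesis G_upper : forall j k : 'I_N, (j < k)%N -> G j k = 0.

Lemma lower_unitriangular_clear m (U : 'M[K]_(m, N)) (i : nat) :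
    (forall j : 'I_N, (i <= j)%N -> (row j G <= U)%MS) ->
  forall y : 'rV[K]_N,
  exists2 c, (c <= U)%MS & forall j : 'I_N, (i <= j)%N -> (y + c) 0 j = 0.
Proof.
move=> rowGU.
suff clear k (y : 'rV[K]_N) : (forall j : 'I_N, (i + k <= j)%N -> y 0 j = 0) ->
    exists2 c, (c <= U)%MS & forall j : 'I_N, (i <= j)%N -> (y + c) 0 j = 0.
  by move=> y; apply: (clear N) => j; rewrite leqNgt ltn_addl.
elim: k y => [|k IHk] y y0.
  by exists 0 => [|j ij]; rewrite ?sub0mx // addr0 y0 ?addn0.
have [lt_ikN | le_Nik] := ltnP (i + k) N; last first.
  by apply: IHk => j /(leq_trans le_Nik); rewrite leqNgt ltn_ord.
pose j0 := Ordinal lt_ikN.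
pose y' := y + (- y 0 j0) *: row j0 G.
have y'0 (j : 'I_N) : (i + k <= j)%N -> y' 0 j = 0.
  rewrite leq_eqVlt => /orP[/eqP ikj | ikj]; rewrite !mxE.
    have -> : j = j0 by apply: val_inj.
    by rewrite G_diag mulr1 subrr.
  by rewrite G_upper // mulr0 addr0 y0 // addnS.
have [c cU y'c0] := IHk y' y'0.
exists ((- y 0 j0) *: row j0 G + c); last by move=> j ij; rewrite addrA y'c0.
by rewrite addmx_sub // scalemx_sub // rowGU // leq_addr.
Qed.

End LowerUnitriangularElimination.

Lemma Gmx_diag n (j : 'I_(2 ^ n)) : Gmx n j j = 1.
Proof.
elim: n j => [|n IHn] j /=; first by rewrite mxE eqxx.
by rewrite castmxE !mxE ltnn IHn mulr1.
Qed.

Lemma Gmx_upper n (j k : 'I_(2 ^ n)) : (j < k)%N -> Gmx n j k = 0.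
Proof.
elim: n j k => [|n IHn] j k /=.
  by move=> /ltn_eqF ne_jk; rewrite mxE -val_eqE ne_jk.
rewrite castmxE !mxE /= => lt_jk; set m := (2 ^ n)%N.
have m_gt0 : (0 < m)%N by rewrite expn_gt0.
have : (j %/ m <= k %/ m)%N by rewrite leq_div2r // ltnW.
rewrite leq_eqVlt => /orP[/eqP eq_jk | ->]; last by rewrite mul0r.
rewrite IHn ?mulr0 //=.
by move: lt_jk; rewrite {1}(divn_eq j m) {1}(divn_eq k m) eq_jk ltn_add2l.
Qed.

Lemma row_Gmx_sub_Amx n i (j : 'I_(2 ^ n)) :
  (i <= j)%N -> (row j (Gmx n) <= Amx n i)%MS.
Proof.
move=> ij; have lt_k : (j - i < 2 ^ n - i)%N.
  by rewrite ltn_sub2r // (leq_ltn_trans ij).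
apply: (eq_row_sub (Ordinal lt_k)); apply/rowP => b; rewrite !mxE.
by congr (Gmx n _ b); apply: val_inj; rewrite /= subnK.
Qed.

Lemma WN_translate (R : realType) (p : R) N (y x d : 'rV['F_2]_N) :
  WN p (y + d) (x + d) = WN p y x.
Proof. by apply: eq_bigr => j _; rewrite !mxE (inj_eq (addIr _)). Qed.

Lemma Wbit_translate (R : realType) (p : R) n i (y d : 'rV['F_2]_(2 ^ n)) :
  (d <= Amx n i)%MS -> Wbit p n i (y + d) = Wbit p n i y.
Proof.
move=> dA; rewrite /Wbit; congr (_ * _).
rewrite (reindex_inj (addIr d)); apply: eq_big => [c | c _]; last first.
  exact: WN_translate.
rewrite !inE; apply/idP/idP => [cdA | cA]; last exact: addmx_sub.
by rewrite -(addrK d c) addmx_sub // -scaleN1r scalemx_sub.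
Qed.

Lemma Wbit_truncate (R : realType) (p : R) n i (y : 'rV['F_2]_(2 ^ n)) :
  exists v : 'rV['F_2]_(2 ^ n),
    (forall j : 'I_(2 ^ n), (i <= j)%N -> v 0 j = 0) /\
    Wbit p n i v = Wbit p n i y.
Proof.
have [c cA yc0] := @lower_unitriangular_clear _ _ (Gmx n)
  (@Gmx_diag n) (@Gmx_upper n) _ _ i (@row_Gmx_sub_Amx n i) y.
by exists (y + c); split; last exact: Wbit_translate.
Qed.

Lemma card_preim_partition_le (T : finType) (rT : eqType) (f : T -> rT)
    (S : {set T}) :
  (forall y, exists2 v, v \in S & f v = f y) ->
  (#|preim_partition f [set: T]| <= #|S|)%N.
Proof.
move=> fS; pose block v := [set z in [set: T] | f v == f z].
apply: leq_trans (leq_imset_card block S).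
apply/subset_leq_card/subsetP => _ /imsetP[y _ ->].
by have [v vS fvy] := fS y; apply/imsetP; exists v; rewrite // /block fvy.
Qed.

Lemma card_rV_vanishing_le (K : finZmodType) (N i : nat) : (i <= N)%N ->
  (#|[set v : 'rV[K]_N | [forall j : 'I_N, (i <= j)%N ==> (v 0%R j == 0%R)]]|
    <= #|K| ^ i)%N.
Proof.
move=> le_iN; set S := [set v : 'rV[K]_N | _].
rewrite -[in (_ <= _ ^ _)%N](card_ord i) -card_ffun.
pose restrict (v : 'rV[K]_N) := [ffun k : 'I_i => v 0 (widen_ord le_iN k)].
have restrict_inj : {in S &, injective restrict}.
  move=> v w; rewrite !inE => /forallP v0 /forallP w0 vw; apply/rowP => j.
  have [lt_ji | le_ij] := ltnP j i; last first.
    by rewrite (eqP (implyP (v0 j) le_ij)) (eqP (implyP (w0 j) le_ij)).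
  have := congr1 (fun g : {ffun 'I_i -> K} => g (Ordinal lt_ji)) vw.
  by rewrite !ffunE; congr (_ = _); congr (_ _ _); apply: val_inj.
by rewrite -(card_in_imset restrict_inj) max_card.
Qed.

Theorem corollary2 (R : realType) (p : R) (n i : nat) :
  0 <= p <= 1 -> (i < 2 ^ n)%N ->
  [/\ (forall y : 'rV['F_2]_(2 ^ n), exists v : 'rV['F_2]_(2 ^ n),
         (forall j : 'I_(2 ^ n), (i <= j)%N -> v 0 j = 0) /\
         Wbit p n i v = Wbit p n i y),
      (forall x : R,
         (exists y : 'rV['F_2]_(2 ^ n), Wbit p n i y = x) <->
         (exists y : 'rV['F_2]_(2 ^ n),
            (forall j : 'I_(2 ^ n), (i <= j)%N -> y 0 j = 0) /\ Wbit p n i y = x))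
    & (#|Wclasses p n i| <= 2 ^ i)%N].
Proof.
move=> _ lt_iN; have truncate := @Wbit_truncate R p n i.
split=> //.
  move=> x; split=> [[y <-] | [y [_ <-]]]; last by exists y.
  by have [v [v0 <-]] := truncate y; exists v.
have := @card_rV_vanishing_le 'F_2 _ _ (ltnW lt_iN); rewrite card_Fp //.
apply: leq_trans; apply: card_preim_partition_le => y; have [v [v0 vy]] := truncate y.
by exists v; rewrite // inE; apply/forallP => j; apply/implyP => /v0 ->.
Qed.
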